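(* Let $F$ be a formal group law over a ring $R$ such that the $n$-series $[n]_F(t)\in R[[t]]$ is not a zero-divisor for any $n>0$. Then the GNS $s(n)=[n]_F(t)$ on $R[[t]]$ is Lucasian: $s(a+b)\equiv s(a)+s(b)\bmod s(a)s(b)$ for all $a,b\in\mathbf N$.
   Context: A generalized $n$-series (GNS) over a ring $D$ is a function $s\colon\mathbf N\to D$ with $s(0)=0$, $s(n)$ a non-zero-divisor for $n>0$, and $s(n-k)\mid s(n)-s(k)$ for all $n>k>0$. A GNS $s$ is Lucasian if $s(a+b)\equiv s(a)+s(b)\bmod s(a)s(b)$ for all $a,b$. Here $[n]_F(t)$ is the $n$-fold formal sum of $t$ with itself. *)

From HB Require Import structures.
From mathcomp Require Import all_boot all_order all_algebra.
From mathcomp Require Import mpoly.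
Set Implicit Arguments. Unset Strict Implicit. Unset Printing Implicit Defensive.
Import GRing.Theory.
Local Open Scope ring_scope.

(* Formal power series in k variables over R: coefficient functions on
   monomials.  Equality of series is pointwise equality of coefficients. *)
Definition series (k : nat) (R : comNzRingType) := 'X_{1..k} -> R.

Section Series.
Context (R : comNzRingType).

Definition strunc k (f : series k R) (d : nat) : {mpoly R[k]} :=
  \sum_(m : 'X_{1..k < d.+1}) f (val m) *: 'X_[val m].

Definition seq_series k (f g : series k R) := forall m, f m = g m.

Definition szero k : series k R := fun _ => 0.

Definition svar k (i : 'I_k) : series k R :=
  fun m => if m == U_(i)%MM then 1 else 0.

(* substitution F(G, H) of series G, H (with zero constant term) into a
   bivariate series F: the coefficient of m only depends on the truncations
   to total degree mdeg m. *)
Definition scomp2 k (F : series 2 R) (G H : series k R) : series k R :=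
  fun m => (strunc F (mdeg m) \mPo [tuple strunc G (mdeg m); strunc H (mdeg m)])@_m.

Definition smul k (f g : series k R) : series k R :=
  fun m => (strunc f (mdeg m) * strunc g (mdeg m))@_m.

Definition ssub k (f g : series k R) : series k R := fun m => f m - g m.

Definition sdvd k (a b : series k R) := exists c : series k R, seq_series b (smul c a).

Definition snzd k (a : series k R) :=
  forall g : series k R, seq_series (smul a g) (@szero k) -> seq_series g (@szero k).

(* One-dimensional commutative formal group law:
   F(x,y) = x + y + (terms of degree >= 2), F(x,y) = F(y,x),
   F(F(x,y),z) = F(x,F(y,z)). *)
Definition is_fgl (F : series 2 R) :=
  [/\ (forall m, (mdeg m <= 1)%N ->
        F m = (if m == U_(ord0)%MM then 1 else 0) + (if m == U_(1 : 'I_2)%MM then 1 else 0)),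
      seq_series (scomp2 F (svar 1) (svar 0)) F &
      seq_series (scomp2 F (scomp2 F (svar (0 : 'I_3)) (svar 1)) (svar 2))
                 (scomp2 F (svar 0) (scomp2 F (svar 1) (svar 2)))].

Fixpoint nseries (F : series 2 R) (n : nat) : series 1 R :=
  match n with
  | 0 => @szero 1
  | n'.+1 => scomp2 F (nseries F n') (svar ord0)
  end.

Definition is_GNS (s : nat -> series 1 R) :=
  [/\ seq_series (s 0%N) (@szero 1),
      (forall n, (0 < n)%N -> snzd (s n)) &
      (forall n k, (0 < k)%N -> (k < n)%N -> sdvd (s (n - k)%N) (ssub (s n) (s k)))].

Definition lucasian (s : nat -> series 1 R) :=
  forall a b : nat, sdvd (smul (s a) (s b)) (ssub (ssub (s (a + b)%N) (s a)) (s b)).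

End Series.

From HB Require Import structures.
From mathcomp Require Import all_boot all_order all_algebra.
From mathcomp Require Import mpoly.
From mathcomp Require Import zify ring.
Set Implicit Arguments. Unset Strict Implicit. Unset Printing Implicit Defensive.
Import GRing.Theory.
Local Open Scope ring_scope.

(* Write F(x, y) = x + y + x y G(x, y).  This is possible because F(x, 0) = x and
   F(0, y) = y, which follow from associativity: Q(x) := F(x, 0) satisfies
   Q(Q(x)) = F(x, F(0, 0)) = Q(x) and Q(x) = x + O(x^2), which forces Q(x) = x.
   Associativity also gives [a + b](t) = F([a](t), [b](t)), hence
   [a + b] - [a] - [b] = [a] [b] G([a], [b]), the Lucas congruence, and
   [n] - [k] = [n - k] (1 + [k] G([n - k], [k])), the divisibility required of a GNS.
   Identities between power series are checked degree by degree on their polynomial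
   truncations. *)

Section OrderGe.
Context (R : nzRingType) (n : nat).
Implicit Types (p q : {mpoly R[n]}).

Definition order_ge (j : nat) p :=
  forall m : 'X_{1..n}, (mdeg m < j)%N -> p@_m = 0.

Lemma order_ge0 j : order_ge j (0 : {mpoly R[n]}).
Proof. by move=> m _; rewrite mcoeff0. Qed.

Lemma order_geW i j p : (i <= j)%N -> order_ge j p -> order_ge i p.
Proof. by move=> ij hp m hm; apply: hp; apply: leq_trans ij. Qed.

Lemma order_geD j p q : order_ge j p -> order_ge j q -> order_ge j (p + q).
Proof. by move=> hp hq m hm; rewrite mcoeffD hp // hq // addr0. Qed.

Lemma order_geN j p : order_ge j p -> order_ge j (- p).
Proof. by move=> hp m hm; rewrite mcoeffN hp // oppr0. Qed.

Lemma order_geB j p q : order_ge j p -> order_ge j q -> order_ge j (p - q).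
Proof. by move=> hp hq; apply/order_geD/order_geN. Qed.

Lemma order_geZ j c p : order_ge j p -> order_ge j (c *: p).
Proof. by move=> hp m hm; rewrite mcoeffZ hp // mulr0. Qed.

Lemma order_ge_sum (I : Type) (r : seq I) (P : pred I) (G : I -> {mpoly R[n]}) j :
  (forall i, P i -> order_ge j (G i)) -> order_ge j (\sum_(i <- r | P i) G i).
Proof. by move=> hG; apply: big_ind => //; [apply: order_ge0 | apply: order_geD]. Qed.

Lemma order_geM i j p q :
  order_ge i p -> order_ge j q -> order_ge (i + j) (p * q).
Proof.
move=> hp hq m hm; rewrite mcoeffM big1 // => -[a b] /= /eqP m_ab.
have : (mdeg a + mdeg b < i + j)%N by rewrite -mdegD -m_ab.
have [a_lt _ | a_ge ab_lt] := ltnP (mdeg a) i; first by rewrite hp ?mul0r.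
by rewrite hq ?mulr0 //; lia.
Qed.

Lemma order_geXn i p k : order_ge i p -> order_ge (i * k) (p ^+ k).
Proof.
move=> hp; elim: k => [|k IH]; first by rewrite muln0.
by rewrite exprS mulnS; apply: order_geM.
Qed.

Lemma order_ge_prod (I : finType) (d : I -> nat) (G : I -> {mpoly R[n]}) :
  (forall i, order_ge (d i) (G i)) -> order_ge (\sum_i d i) (\prod_i G i).
Proof.
by move=> hG; apply: (big_ind2 order_ge) => // *; apply: order_geM.
Qed.

Lemma order_ge1X (i : 'I_n) : order_ge 1 'X_i.
Proof.
move=> m; rewrite ltnS leqn0 mdeg_eq0 => /eqP ->; rewrite mcoeffX.
by case: eqP => // /(congr1 mdeg); rewrite mdeg1 mdeg0.
Qed.

Definition eq_upto (e : nat) p q := order_ge e.+1 (p - q).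

Lemma eq_uptoP e p q :
  eq_upto e p q <-> (forall m, (mdeg m <= e)%N -> p@_m = q@_m).
Proof.
split=> [h m hm | h m hm]; last by rewrite mcoeffB h ?subrr.
by apply/eqP; rewrite -subr_eq0 -mcoeffB h.
Qed.

Lemma eq_upto_mcoeff e p q m :
  eq_upto e p q -> (mdeg m <= e)%N -> p@_m = q@_m.
Proof. by move/eq_uptoP; apply. Qed.

Lemma eq_upto_refl e p : eq_upto e p p.
Proof. by rewrite /eq_upto subrr; apply: order_ge0. Qed.

Lemma eq_upto_sym e p q : eq_upto e p q -> eq_upto e q p.
Proof. by move=> h; rewrite /eq_upto -opprB; apply: order_geN. Qed.

Lemma eq_upto_trans e q p r : eq_upto e p q -> eq_upto e q r -> eq_upto e p r.
Proof. by move=> pq qr; rewrite /eq_upto -(subrK q p) -addrA; apply: order_geD. Qed.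

Lemma eq_uptoW d e p q : (d <= e)%N -> eq_upto e p q -> eq_upto d p q.
Proof. by move=> de; apply: order_geW. Qed.

Lemma eq_uptoD e p p' q q' :
  eq_upto e p p' -> eq_upto e q q' -> eq_upto e (p + q) (p' + q').
Proof. by move=> hp hq; rewrite /eq_upto opprD addrACA; apply: order_geD. Qed.

Lemma eq_uptoZ e c p p' : eq_upto e p p' -> eq_upto e (c *: p) (c *: p').
Proof. by move=> h; rewrite /eq_upto -scalerBr; apply: order_geZ. Qed.

Lemma eq_uptoM e p p' q q' :
  eq_upto e p p' -> eq_upto e q q' -> eq_upto e (p * q) (p' * q').
Proof.
move=> hp hq; rewrite /eq_upto; have -> : p * q - p' * q' = (p - p') * q + p' * (q - q').
  by rewrite mulrBl mulrBr addrA subrK.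
by apply: order_geD; [rewrite -(addn0 e.+1) | rewrite -(add0n e.+1)];
  apply: order_geM.
Qed.

Lemma eq_uptoXn e p p' k : eq_upto e p p' -> eq_upto e (p ^+ k) (p' ^+ k).
Proof.
move=> h; elim: k => [|k IH]; first exact: eq_upto_refl.
by rewrite !exprS; apply: eq_uptoM.
Qed.

Lemma eq_upto_sum (I : Type) (r : seq I) (P : pred I) (G G' : I -> {mpoly R[n]}) e :
  (forall i, P i -> eq_upto e (G i) (G' i)) ->
  eq_upto e (\sum_(i <- r | P i) G i) (\sum_(i <- r | P i) G' i).
Proof.
by move=> h; apply: (big_ind2 (eq_upto e)) => //; [apply: eq_upto_refl | apply: eq_uptoD].
Qed.

Lemma eq_upto_prod (I : finType) (G G' : I -> {mpoly R[n]}) e :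
  (forall i, eq_upto e (G i) (G' i)) -> eq_upto e (\prod_i G i) (\prod_i G' i).
Proof.
by move=> h; apply: (big_ind2 (eq_upto e)) => //; [apply: eq_upto_refl | apply: eq_uptoM].
Qed.

End OrderGe.

Section Composition.
Context (R : comNzRingType) (n k : nat).
Implicit Types (p q : {mpoly R[n]}) (qs : n.-tuple {mpoly R[k]}).

Lemma order_ge_compX a qs (m : 'X_{1..n}) :
  (forall i, order_ge a (tnth qs i)) -> order_ge (mdeg m * a) ('X_[m] \mPo qs).
Proof.
move=> hqs; rewrite comp_mpolyX mdegE big_distrl /=.
by apply: order_ge_prod => i; rewrite mulnC; apply: order_geXn.
Qed.

Lemma order_ge_comp a j p qs :
  (forall i, order_ge a (tnth qs i)) -> order_ge j p -> order_ge (j * a) (p \mPo qs).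
Proof.
move=> hqs hp; rewrite comp_mpolyEX big_seq; apply: order_ge_sum => m.
rewrite mcoeff_msupp => pm; apply/order_geZ/(order_geW _ (order_ge_compX (m := m) hqs)).
by rewrite leq_mul2r leqNgt; apply/orP; right; apply: contra pm => /hp ->.
Qed.

Lemma eq_upto_comp e p p' qs qs' : eq_upto e p p' ->
  (forall i, order_ge 1 (tnth qs i)) -> (forall i, eq_upto e (tnth qs i) (tnth qs' i)) ->
  eq_upto e (p \mPo qs) (p' \mPo qs').
Proof.
move=> pp' qs1 qsqs'; apply: (@eq_upto_trans _ _ _ (p' \mPo qs)).
  by rewrite /eq_upto -comp_mpolyB -[e.+1]muln1; apply: order_ge_comp.
rewrite !comp_mpolyEX; apply: eq_upto_sum => m _; apply: eq_uptoZ.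
by rewrite !comp_mpolyX; apply: eq_upto_prod => i; apply: eq_uptoXn.
Qed.

Lemma comp_mpolyA (j : nat) p qs (rs : k.-tuple {mpoly R[j]}) :
  (p \mPo qs) \mPo rs = p \mPo [tuple tnth qs i \mPo rs | i < n].
Proof.
rewrite (comp_mpolyEX p qs) (comp_mpolyEX p) raddf_sum /=; apply: eq_bigr => m _.
rewrite !comp_mpolyZ !comp_mpolyX rmorph_prod /=; congr (_ *: _).
by apply: eq_bigr => i _; rewrite rmorphXn /= tnth_mktuple.
Qed.

End Composition.

Section BinaryComposition.
Context (R : comNzRingType) (k : nat).
Implicit Types (p : {mpoly R[2]}) (a b : {mpoly R[k]}).

Lemma eq_upto_comp2 e p p' a a' b b' : eq_upto e p p' ->
  order_ge 1 a -> order_ge 1 b -> eq_upto e a a' -> eq_upto e b b' ->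
  eq_upto e (p \mPo [tuple a; b]) (p' \mPo [tuple a'; b']).
Proof. by move=> pp' a1 b1 aa' bb'; apply: eq_upto_comp => // -[[|[|]]]. Qed.

Lemma order_ge_comp2 j p a b :
  order_ge 1 a -> order_ge 1 b -> order_ge j p -> order_ge j (p \mPo [tuple a; b]).
Proof. by move=> a1 b1 hp; rewrite -[j]muln1; apply: order_ge_comp => // -[[|[|]]]. Qed.

Lemma comp_mpoly2A (j : nat) p a b (rs : k.-tuple {mpoly R[j]}) :
  (p \mPo [tuple a; b]) \mPo rs = p \mPo [tuple a \mPo rs; b \mPo rs].
Proof.
by rewrite comp_mpolyA; congr (_ \mPo _); apply: eq_from_tnth => -[[|[|]]] //= ?;
  rewrite tnth_mktuple.
Qed.

End BinaryComposition.

Section OneVariable.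
Context (R : comNzRingType).

Lemma order_ge_comp1B k a b (p : {mpoly R[1]}) (q q' : {mpoly R[k]}) :
  (0 < a)%N -> order_ge a p -> order_ge b (q - q') -> order_ge 1 q -> order_ge 1 q' ->
  order_ge (a + b).-1 ((p \mPo [tuple q]) - (p \mPo [tuple q'])).
Proof.
move=> a_gt0 hp hqq' q1 q'1; rewrite !comp_mpolyEX -sumrB big_seq.
apply: order_ge_sum => m; rewrite mcoeff_msupp -scalerBr => pm; apply: order_geZ.
have am : (a <= m ord0)%N.
  by rewrite leqNgt; apply: contra pm => lt; apply/eqP/hp; rewrite mdegE big_ord1.
rewrite !comp_mpolyX !big_ord1 !tnth0 subrXX.
apply: (@order_geW _ _ _ (b + (m ord0).-1)); first lia.
apply: order_geM => //; apply: order_ge_sum => i _.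
apply: (@order_geW _ _ _ ((m ord0).-1 - i + i)%N); first by have := ltn_ord i; lia.
by apply: order_geM; rewrite -[X in order_ge X _]mul1n; apply: order_geXn.
Qed.

(* If D := Q - x has order d, then D(Q) = D(x) + O(x^(d+1)) because Q - x has order 2,
   while D(Q) = Q(Q) - Q vanishes up to degree e; so D has order d + 1. *)
Lemma eq_upto_X_idem e (Q : {mpoly R[1]}) :
  eq_upto 1 Q 'X_0 -> eq_upto e (Q \mPo [tuple Q]) Q -> eq_upto e Q 'X_0.
Proof.
move=> QX QQ; have Q1 : order_ge 1 Q.
  rewrite -(subrK 'X_0 Q); apply: order_geD; last exact: order_ge1X.
  exact: (order_geW _ QX).
suff: forall j, (j <= e)%N -> eq_upto j Q 'X_0 by apply.
elim=> [|j IH] je; first exact: eq_uptoW QX.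
have {IH} D_ord : order_ge j.+1 (Q - 'X_0) := IH (ltnW je).
have DX : (Q - 'X_0) \mPo [tuple 'X_0] = Q - 'X_0.
  by rewrite -[RHS]comp_mpoly_id; congr (_ \mPo _); apply: eq_from_tnth => i;
    rewrite tnth_mktuple (ord1 i).
have DQ : order_ge j.+2 ((Q - 'X_0) \mPo [tuple Q]).
  by rewrite comp_mpolyB comp_mpolyXU; apply: order_geW QQ.
have := order_ge_comp1B (isT : 0 < j.+1)%N D_ord QX Q1 (order_ge1X R 0).
rewrite DX addn2 /= => DQX; rewrite /eq_upto.
by rewrite -(subKr ((Q - 'X_0) \mPo [tuple Q]) (Q - 'X_0)); apply: order_geB.
Qed.

End OneVariable.

Section Approximation.
Context (R : comNzRingType) (k : nat).
Implicit Types (f g : series k R) (p q : {mpoly R[k]}).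

Definition approx e f p := forall m, (mdeg m <= e)%N -> f m = p@_m.

Definition zero_const f := f 0%MM = 0.

Definition sadd f g : series k R := fun m => f m + g m.

Definition sone : series k R := fun m => (m == 0%MM)%:R.

Lemma mcoeff_strunc f d m :
  (strunc f d)@_m = if (mdeg m <= d)%N then f m else 0.
Proof.
case: ifP => md; first exact: (mcoeff_mpoly f (k := d.+1) md).
rewrite raddf_sum big1 // => -[m' m'd] _ /=; rewrite mcoeffZ mcoeffX.
by case: eqP => [m'm | _]; [move: m'd; rewrite m'm ltnS md | rewrite mulr0].
Qed.

Lemma approx_strunc e f : approx e f (strunc f e).
Proof. by move=> m me; rewrite mcoeff_strunc me. Qed.

Lemma approxW d e f p : (d <= e)%N -> approx e f p -> approx d f p.
Proof. by move=> de fp m md; apply/fp/(leq_trans md). Qed.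

Lemma approx_eq_upto e f p q : eq_upto e p q -> approx e f p -> approx e f q.
Proof. by move=> /eq_uptoP pq fp m me; rewrite fp // pq. Qed.

Lemma approx_seq_series e f g p : seq_series f g -> approx e g p -> approx e f p.
Proof. by move=> fg gp m me; rewrite fg gp. Qed.

Lemma eq_upto_strunc e f p : approx e f p -> eq_upto e (strunc f e) p.
Proof. by move=> fp; apply/eq_uptoP => m me; rewrite -fp // mcoeff_strunc me. Qed.

Lemma eq_upto_approx e f g p q :
  seq_series f g -> approx e f p -> approx e g q -> eq_upto e p q.
Proof. by move=> fg fp gq; apply/eq_uptoP => m me; rewrite -fp // -gq. Qed.

Lemma seq_series_approx f g (p : nat -> {mpoly R[k]}) :
  (forall e, approx e f (p e)) -> (forall e, approx e g (p e)) -> seq_series f g.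
Proof. by move=> fp gp m; rewrite (fp (mdeg m)) // (gp (mdeg m)). Qed.

Lemma order_ge1_strunc e f : zero_const f -> order_ge 1 (strunc f e).
Proof.
move=> f0 m; rewrite ltnS leqn0 mdeg_eq0 => /eqP ->.
by rewrite mcoeff_strunc; case: ifP.
Qed.

Lemma zero_const_approx e f p : approx e f p -> order_ge 1 p -> zero_const f.
Proof. by move=> fp p1; rewrite /zero_const fp ?mdeg0 // p1 ?mdeg0. Qed.

Lemma approx_svar e (i : 'I_k) : approx e (svar R i) 'X_i.
Proof. by move=> m _; rewrite mcoeffX /svar eq_sym; case: eqP. Qed.

Lemma zero_const_svar (i : 'I_k) : zero_const (svar R i).
Proof. exact: (zero_const_approx (@approx_svar 0 i) (order_ge1X R i)). Qed.

Lemma approx_szero e : approx e (@szero R k) 0.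
Proof. by move=> m _; rewrite mcoeff0. Qed.

Lemma approx_sone e : approx e sone 1.
Proof. by move=> m _; rewrite mcoeff1. Qed.

Lemma approx_sadd e f g p q : approx e f p -> approx e g q -> approx e (sadd f g) (p + q).
Proof. by move=> fp gq m me; rewrite /sadd mcoeffD fp // gq. Qed.

Lemma approx_ssub e f g p q : approx e f p -> approx e g q -> approx e (ssub f g) (p - q).
Proof. by move=> fp gq m me; rewrite /ssub mcoeffB fp // gq. Qed.

Lemma approx_smul e f g p q : approx e f p -> approx e g q -> approx e (smul f g) (p * q).
Proof.
move=> fp gq m me; apply: (eq_upto_mcoeff _ (leqnn _)).
by apply: eq_uptoM; apply/eq_upto_strunc/(approxW me).
Qed.

End Approximation.

Lemma approx_scomp2 (R : comNzRingType) k e (F : series 2 R) (G H : series k R) P A B :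
  approx e F P -> approx e G A -> approx e H B -> zero_const G -> zero_const H ->
  approx e (scomp2 F G H) (P \mPo [tuple A; B]).
Proof.
move=> FP GA HB G0 H0 m me; apply: (eq_upto_mcoeff _ (leqnn _)).
by apply: eq_upto_comp2; try apply: order_ge1_strunc => //;
  apply/eq_upto_strunc/(approxW me).
Qed.

Lemma zero_const_scomp2 (R : comNzRingType) k (F : series 2 R) (G H : series k R) :
  zero_const F -> zero_const G -> zero_const H -> zero_const (scomp2 F G H).
Proof.
move=> F0 G0 H0; apply: (zero_const_approx (e := 0)).
  by apply: approx_scomp2 => //; apply: approx_strunc.
by apply: order_ge_comp2; apply: order_ge1_strunc.
Qed.

Lemma zero_const_nseries (R : comNzRingType) (F : series 2 R) n :
  zero_const F -> zero_const (nseries F n).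
Proof.
move=> F0; elim: n => [|n IH] //=.
by apply: zero_const_scomp2 => //; apply: zero_const_svar.
Qed.

Lemma mcoeff_comp_var0 (R : comNzRingType) n (j : 'I_n) (p : {mpoly R[n]})
    (m : 'X_{1..n}) :
  m j = 0%N -> (p \mPo [tuple if i == j then 0 else 'X_i | i < n])@_m = p@_m.
Proof.
move=> mj; rewrite comp_mpolyEX [in RHS](mpolyE p) !raddf_sum /=.
apply: eq_bigr => a _; rewrite !mcoeffZ mcoeffX comp_mpolyX; congr (_ * _).
have [aj | aj] := eqVneq (a j) 0%N.
  rewrite [X in X@__](_ : _ = 'X_[a]) ?mcoeffX // mpolyXE_id; apply: eq_bigr => i _.
  by rewrite tnth_mktuple; case: eqP => // ->; rewrite aj !expr0.
rewrite (bigD1 j) //= tnth_mktuple eqxx expr0n (negbTE aj) mul0r mcoeff0.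
by case: eqP => // am; move: aj; rewrite am mj.
Qed.

Lemma mcoeffMXE (R : nzRingType) n (p : {mpoly R[n]}) (u m : 'X_{1..n}) :
  (p * 'X_[u])@_m = if (u <= m)%MM then p@_(m - u)%MM else 0.
Proof.
case: ifP => um; first by rewrite -{1}(submK um) addmC mcoeffMX.
rewrite mcoeffM big1 // => -[a b] /= /eqP m_ab; rewrite mcoeffX.
case: eqP => [bu | _]; last by rewrite mulr0.
suff : (u <= m)%MM by rewrite um.
by rewrite m_ab -bu lem_addl.
Qed.

Section FormalGroupLaw.
Context (R : comNzRingType) (F : series 2 R).
Hypothesis F_fgl : is_fgl F.
Local Notation Ftr e := (strunc F e).

Lemma approx1_fgl : approx 1 F ('X_0 + 'X_1).
Proof.
case: F_fgl => lin _ _ m m1; rewrite lin // mcoeffD !mcoeffX !(eq_sym _ m).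
by case: (m == _); case: (m == _).
Qed.

Lemma zero_const_fgl : zero_const F.
Proof.
by apply: (zero_const_approx approx1_fgl); apply: order_geD; apply: order_ge1X.
Qed.

Local Ltac approx_comp :=
  do ![ apply: approx_scomp2 | apply: zero_const_scomp2 | apply: zero_const_nseries
      | exact: approx_strunc | exact: approx_svar | exact: approx_szero
      | exact: zero_const_fgl | exact: zero_const_svar ].

Lemma fgl_comm k e (U V : {mpoly R[k]}) : order_ge 1 U -> order_ge 1 V ->
  eq_upto e (Ftr e \mPo [tuple U; V]) (Ftr e \mPo [tuple V; U]).
Proof.
case: F_fgl => _ comm _ U1 V1.
have C : eq_upto e (Ftr e \mPo [tuple 'X_1; 'X_(0 : 'I_2)]) (Ftr e).
  by apply: (eq_upto_approx comm _ (approx_strunc F)); approx_comp.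
have := eq_upto_comp2 C U1 V1 (eq_upto_refl U) (eq_upto_refl V).
by rewrite comp_mpoly2A !comp_mpolyXU /=; apply: eq_upto_sym.
Qed.

Lemma fgl_assoc k e (U V W : {mpoly R[k]}) :
  order_ge 1 U -> order_ge 1 V -> order_ge 1 W ->
  eq_upto e (Ftr e \mPo [tuple Ftr e \mPo [tuple U; V]; W])
            (Ftr e \mPo [tuple U; Ftr e \mPo [tuple V; W]]).
Proof.
case: F_fgl => _ _ assoc U1 V1 W1.
have A : eq_upto e (Ftr e \mPo [tuple Ftr e \mPo [tuple 'X_0; 'X_1]; 'X_(2 : 'I_3)])
                   (Ftr e \mPo [tuple 'X_0; Ftr e \mPo [tuple 'X_1; 'X_2]]).
  by apply: (eq_upto_approx assoc); approx_comp.
have := eq_upto_comp (qs := [tuple U; V; W]) A _ (fun i => eq_upto_refl _).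
by rewrite !comp_mpoly2A !comp_mpolyXU /=; apply; case=> -[|[|[|]]].
Qed.

Lemma fgl_linear e : (0 < e)%N -> eq_upto 1 (Ftr e) ('X_0 + 'X_1).
Proof.
by move=> e_gt0; apply: (eq_upto_approx (fun m => erefl) (approxW e_gt0 (approx_strunc F)));
  exact: approx1_fgl.
Qed.

Lemma fgl_unitr k e (U : {mpoly R[k]}) :
  order_ge 1 U -> eq_upto e (Ftr e \mPo [tuple U; 0]) U.
Proof.
move=> U1; case: e => [|e].
  apply: order_geB => //.
  apply: order_ge_comp2 => //; first exact: order_ge0.
  exact: order_ge1_strunc zero_const_fgl.
set Q : {mpoly R[1]} := Ftr e.+1 \mPo [tuple 'X_0; 0].
have X1 : order_ge 1 ('X_0 : {mpoly R[1]}) by apply: order_ge1X.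
have O1 : order_ge 1 (0 : {mpoly R[1]}) by apply: order_ge0.
have QX1 : eq_upto 1 Q 'X_0.
  have := eq_upto_comp2 (fgl_linear (ltn0Sn e)) X1 O1 (eq_upto_refl 'X_0) (eq_upto_refl 0).
  by rewrite comp_mpolyD !comp_mpolyXU /= addr0.
have F00 : order_ge e.+2 (Ftr e.+1 \mPo [tuple 0; 0] : {mpoly R[1]}).
  rewrite -[e.+2]mul1n; apply: order_ge_comp; last exact: order_ge1_strunc zero_const_fgl.
  by case=> -[|[|]] // *; apply: order_ge0.
have QQ : eq_upto e.+1 (Q \mPo [tuple Q]) Q.
  rewrite {1}/Q comp_mpoly2A comp_mpolyXU comp_mpoly0 /=.
  apply: eq_upto_trans (fgl_assoc (e := e.+1) X1 O1 O1) _.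
  apply: eq_upto_comp2 => //; try exact: eq_upto_refl.
    exact: order_geW F00.
  by rewrite /eq_upto subr0.
have := eq_upto_comp (qs := [tuple U]) (eq_upto_X_idem QX1 QQ) _ (fun i => eq_upto_refl _).
by rewrite comp_mpoly2A !comp_mpolyXU comp_mpoly0 /=; apply; case=> -[].
Qed.

Lemma fgl_unitl k e (U : {mpoly R[k]}) :
  order_ge 1 U -> eq_upto e (Ftr e \mPo [tuple 0; U]) U.
Proof.
move=> U1; apply: eq_upto_trans (fgl_unitr (e := e) U1).
by apply: fgl_comm => //; apply: order_ge0.
Qed.


Lemma fgl_axis (m : 'X_{1..2}) : (m 0 == 0%N) || (m 1 == 0%N) ->
  F m = ('X_0 + 'X_1 : {mpoly R[2]})@_m.
Proof.
have X1 (i : 'I_2) : order_ge 1 ('X_i : {mpoly R[2]}) by apply: order_ge1X.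
have coefX (i : 'I_2) : m i = 0%N -> ('X_i : {mpoly R[2]})@_m = 0.
  by move=> mi; rewrite mcoeffX; case: eqP mi => // <-; rewrite mnm1E eqxx.
rewrite (approx_strunc F (leqnn (mdeg m))) mcoeffD; case/orP => /eqP mi.
  rewrite (coefX 0) // add0r -(mcoeff_comp_var0 _ mi).
  have -> : [tuple if i == 0 then 0 else 'X_i | i < 2]
            = [tuple 0; 'X_1] :> 2.-tuple {mpoly R[2]}.
    by apply: eq_from_tnth => -[[|[|]]] //= ?; rewrite tnth_mktuple.
  exact: eq_upto_mcoeff (fgl_unitl (X1 1)) (leqnn _).
rewrite (coefX 1) // addr0 -(mcoeff_comp_var0 _ mi).
have -> : [tuple if i == 1 then 0 else 'X_i | i < 2]
          = [tuple 'X_0; 0] :> 2.-tuple {mpoly R[2]}.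
  by apply: eq_from_tnth => -[[|[|]]] //= ?; rewrite tnth_mktuple.
exact: eq_upto_mcoeff (fgl_unitr (X1 0)) (leqnn _).
Qed.

Definition fgl_quot : series 2 R :=
  fun m => F (m + (U_(0%R : 'I_2) + U_(1%R : 'I_2)))%MM.

Lemma fgl_decomp e : approx e F ('X_0 + 'X_1 + 'X_0 * 'X_1 * strunc fgl_quot e).
Proof.
move=> m me; rewrite mcoeffD -mpolyXD mulrC mcoeffMXE.
case: ifP => [um | /negbT um].
  have m2 : (1 < mdeg m)%N by rewrite -(submK um) !mdegD !mdeg1 addn2.
  have coefX (i : 'I_2) : ('X_i : {mpoly R[2]})@_m = 0.
    by rewrite mcoeffX; case: eqP m2 => // <-; rewrite mdeg1.
  rewrite mcoeffD !coefX !add0r mcoeff_strunc (leq_trans (mdegB _ _) me).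
  by rewrite /fgl_quot submK.
rewrite addr0; apply: fgl_axis; apply: contraR um.
rewrite negb_or -!lt0n => /andP[m0 m1]; apply/mnm_lepP => -[[|[|]] //] i.
  by move: m0; rewrite mnmDE !mnm1E (_ : Ordinal i = 0) //; apply: val_inj.
by move: m1; rewrite mnmDE !mnm1E (_ : Ordinal i = 1) //; apply: val_inj.
Qed.

Lemma fgl_split k e (U V : {mpoly R[k]}) : order_ge 1 U -> order_ge 1 V ->
  eq_upto e (Ftr e \mPo [tuple U; V])
            (U + V + U * V * (strunc fgl_quot e \mPo [tuple U; V])).
Proof.
move=> U1 V1; have := eq_upto_comp2 (eq_upto_strunc (fgl_decomp (e := e))) U1 V1
  (eq_upto_refl U) (eq_upto_refl V).
by rewrite !rmorphD !rmorphM /= !comp_mpolyXU.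
Qed.

Local Notation S := (nseries F).

Definition nseriesD_quot a b : series 1 R := scomp2 fgl_quot (S a) (S b).

Lemma order_ge1_strunc_nseries e n : order_ge 1 (strunc (S n) e).
Proof. exact/order_ge1_strunc/zero_const_nseries/zero_const_fgl. Qed.

Lemma nseriesD a b : seq_series (S (a + b)) (scomp2 F (S a) (S b)).
Proof.
have S1 := order_ge1_strunc_nseries.
elim: b => [|b IH].
  apply: (seq_series_approx (p := strunc (S a))) => e.
    by rewrite addn0; apply: approx_strunc.
  by apply: (approx_eq_upto (fgl_unitr (S1 e a))); approx_comp.
rewrite addnS /=; apply: (seq_series_approx (p := fun e =>
  Ftr e \mPo [tuple strunc (S a) e; Ftr e \mPo [tuple strunc (S b) e; 'X_0]])) => e.
  apply: (approx_eq_upto (fgl_assoc (S1 e a) (S1 e b) (order_ge1X R 0))).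
  apply: approx_scomp2; try approx_comp.
  by apply: (approx_seq_series IH); approx_comp.
by approx_comp.
Qed.

Lemma approx_nseriesD e a b :
  approx e (S (a + b)) (strunc (S a) e + strunc (S b) e +
    strunc (S a) e * strunc (S b) e * strunc (nseriesD_quot a b) e).
Proof.
have S1 := @order_ge1_strunc_nseries e.
apply: (approx_seq_series (nseriesD a b)).
apply: (approx_eq_upto (eq_upto_trans (fgl_split (S1 a) (S1 b)) _)); last by approx_comp.
apply/eq_uptoD/eq_uptoM/eq_upto_sym/eq_upto_strunc; try exact: eq_upto_refl.
by approx_comp.
Qed.

Lemma lucasian_nseries : lucasian S.
Proof.
move=> a b; exists (nseriesD_quot a b).
apply: (seq_series_approx (p := fun e =>
  strunc (S a) e * strunc (S b) e * strunc (nseriesD_quot a b) e)) => e.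
  have := approx_ssub (approx_ssub (approx_nseriesD (e := e) a b) (approx_strunc (S a)))
    (approx_strunc (S b)).
  by congr approx; ring.
have := approx_smul (approx_strunc (e := e) (nseriesD_quot a b))
  (approx_smul (approx_strunc (S a)) (approx_strunc (S b))).
by congr approx; ring.
Qed.

Lemma nseriesB_dvd n k : (k <= n)%N -> sdvd (S (n - k)%N) (ssub (S n) (S k)).
Proof.
move=> kn; exists (sadd (@sone R 1) (smul (S k) (nseriesD_quot (n - k)%N k))).
apply: (seq_series_approx (p := fun e => (1 + strunc (S k) e *
  strunc (nseriesD_quot (n - k)%N k) e) * strunc (S (n - k)%N) e)) => e.
  have := approx_ssub (approx_nseriesD (e := e) (n - k)%N k) (approx_strunc (S k)).
  by rewrite subnK //; congr approx; ring.
apply: approx_smul; last exact: approx_strunc.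
by apply: approx_sadd; [exact: approx_sone | apply: approx_smul; exact: approx_strunc].
Qed.

End FormalGroupLaw.

Theorem lemma5p10 (R : comNzRingType) (F : series 2 R) :
  is_fgl F ->
  (forall n : nat, (0 < n)%N -> snzd (nseries F n)) ->
  is_GNS (nseries F) /\ lucasian (nseries F).
Proof.
move=> F_fgl nzd; split; last exact: lucasian_nseries.
by split=> // n k _ /ltnW; apply: nseriesB_dvd.
Qed.
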